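(* Consider the constrained multivariate linear model described in the context and assume $\mathcal U\supseteq\mathcal E_{\boldsymbol\Sigma}(\mathcal B)$, with the semi-orthogonal bases $\mathbf U=(\boldsymbol\Gamma,\boldsymbol\Gamma_{01})$ and $\boldsymbol\Gamma_0=(\boldsymbol\Gamma_{01},\boldsymbol\Gamma_{02})$ described there. Let $\mathbf c\in\mathbb R^r$ and for an estimator $\widehat{\boldsymbol\beta}$ write $\mathrm{avar}(\sqrt n\,\mathbf c^T\widehat{\boldsymbol\beta})=(\mathbf I_p\otimes\mathbf c^T)\,\mathrm{avar}(\sqrt n\,\mathrm{vec}(\widehat{\boldsymbol\beta}))\,(\mathbf I_p\otimes\mathbf c)$. Then 1. if $\mathbf c\in\mathcal E_{\boldsymbol\Sigma}(\mathcal B)$, then $\mathrm{avar}(\sqrt n\,\mathbf c^T\widehat{\boldsymbol\beta}_{\mathrm{cm}})=\mathrm{avar}(\sqrt n\,\mathbf c^T\widehat{\boldsymbol\beta}_{\mathrm{em}})$; 2. if $\mathbf c\in\mathrm{span}(\boldsymbol\Gamma_{02})$, then $\mathrm{avar}(\sqrt n\,\mathbf c^T\widehat{\boldsymbol\beta}_{\mathrm{cm}})\le\mathrm{avar}(\sqrt n\,\mathbf c^T\widehat{\boldsymbol\beta}_{\mathrm{em}})$; 3. if $\mathbf c\in\mathrm{span}(\boldsymbol\Gamma_{01})$, $\mathrm{rank}(\mathbf M(\boldsymbol\Sigma_{\mathbf X}))=\mathrm{rank}(\boldsymbol\eta\boldsymbol\Sigma_{\mathbf X}\boldsymbol\eta^T\otimes\boldsymbol\Omega_0^{-1})$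 and $\boldsymbol\Omega_{0,12}=0$, then $\mathrm{avar}(\sqrt n\,\mathbf c^T\widehat{\boldsymbol\beta}_{\mathrm{cm}})\ge\mathrm{avar}(\sqrt n\,\mathbf c^T\widehat{\boldsymbol\beta}_{\mathrm{em}})$, where inequalities are in the Loewner order and $$\mathrm{avar}(\sqrt{n}\,\mathrm{vec}(\widehat{\boldsymbol\beta}_{\mathrm{cm}}))=\boldsymbol\Sigma_{\mathbf X}^{-1}\otimes \mathbf U(\mathbf U^T\boldsymbol\Sigma^{-1}\mathbf U)^{-1}\mathbf U^T,$$ $$\mathrm{avar}(\sqrt{n}\,\mathrm{vec}(\widehat{\boldsymbol\beta}_{\mathrm{em}}))=\boldsymbol\Sigma_{\mathbf X}^{-1}\otimes\boldsymbol\Gamma\boldsymbol\Omega\boldsymbol\Gamma^T+(\boldsymbol\eta^T\otimes\boldsymbol\Gamma_0)\,\mathbf M^{\dagger}(\boldsymbol\Sigma_{\mathbf X})\,(\boldsymbol\eta\otimes\boldsymbol\Gamma_0^T).$$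
   Context: Data: for $i=1,\dots,n$, $\mathbf Y_i=\mathbf U\boldsymbol\alpha_0+\mathbf U\boldsymbol\alpha\mathbf X_i+\boldsymbol\varepsilon_i$, where $\mathbf Y_i\in\mathbb R^r$, the predictors $\mathbf X_i\in\mathbb R^p$ are non-stochastic, $\mathbf U\in\mathbb R^{r\times k}$ is a known semi-orthogonal matrix ($\mathbf U^T\mathbf U=\mathbf I_k$), $\boldsymbol\alpha_0\in\mathbb R^k$, $\boldsymbol\alpha\in\mathbb R^{k\times p}$, and the $\boldsymbol\varepsilon_i$ are i.i.d. $N(0,\boldsymbol\Sigma)$ with $\boldsymbol\Sigma>0$. Set $\boldsymbol\beta=\mathbf U\boldsymbol\alpha$, $\mathcal B=\mathrm{span}(\boldsymbol\beta)$, $\mathcal U=\mathrm{span}(\mathbf U)$, and let $\boldsymbol\Sigma_{\mathbf X}$ (positive definite) be the limit of the sample covariance matrix of the $\mathbf X_i$. A subspace $\mathcal R$ reduces the symmetric matrix $\boldsymbol\Sigma$ if $\boldsymbol\Sigma\mathcal R\subseteq\mathcal R$; the $\boldsymbol\Sigma$-envelope $\mathcal E_{\boldsymbol\Sigma}(\mathcal B)$ is the smallest reducing subspace of $\boldsymbol\Sigma$ containing $\mathcal B$. Let $u=\dim\mathcal E_{\boldsymbol\Sigma}(\mathcal B)$, $\boldsymbol\Gamma\in\mathbb R^{r\times u}$ a semi-orthogonal basis of it, $(\boldsymbol\Gamma,\boldsymbol\Gamma_0)$ orthogonal; since $\mathcal U\supseteq\mathcal E_{\boldsymbol\Sigma}(\mathcal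 B)$ these are chosen so that $\mathbf U=(\boldsymbol\Gamma,\boldsymbol\Gamma_{01})$ and $\boldsymbol\Gamma_0=(\boldsymbol\Gamma_{01},\boldsymbol\Gamma_{02})$ are semi-orthogonal. Let $\boldsymbol\eta=\boldsymbol\Gamma^T\boldsymbol\beta$, $\boldsymbol\Omega=\boldsymbol\Gamma^T\boldsymbol\Sigma\boldsymbol\Gamma$, $\boldsymbol\Omega_0=\boldsymbol\Gamma_0^T\boldsymbol\Sigma\boldsymbol\Gamma_0$, partitioned as $\boldsymbol\Omega_0=(\boldsymbol\Omega_{0,ij})_{i,j=1,2}$ conformably with $\boldsymbol\Gamma_0=(\boldsymbol\Gamma_{01},\boldsymbol\Gamma_{02})$, so $\boldsymbol\Omega_{0,12}=\boldsymbol\Gamma_{01}^T\boldsymbol\Sigma\boldsymbol\Gamma_{02}$. For $\mathbf C\in\mathbb R^{p\times p}$, $\mathbf M(\mathbf C)=\boldsymbol\eta\mathbf C\boldsymbol\eta^T\otimes\boldsymbol\Omega_0^{-1}+\boldsymbol\Omega\otimes\boldsymbol\Omega_0^{-1}+\boldsymbol\Omega^{-1}\otimes\boldsymbol\Omega_0-2\mathbf I$; $\dagger$ is the Moore–Penrose inverse. $\widehat{\boldsymbol\beta}_{\mathrm{cm}}$ is the maximum likelihood estimator of $\boldsymbol\beta$ under the constrained model above, and $\widehat{\boldsymbol\beta}_{\mathrm{em}}$ is the maximum likelihood estimator of $\boldsymbol\beta$ under the unconstrained envelope model $\mathbf Y_i=\boldsymbol\beta_0+\boldsymbol\Gamma\boldsymbol\eta\mathbf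 X_i+\boldsymbol\varepsilon_i$, $\boldsymbol\Sigma=\boldsymbol\Gamma\boldsymbol\Omega\boldsymbol\Gamma^T+\boldsymbol\Gamma_0\boldsymbol\Omega_0\boldsymbol\Gamma_0^T$ ($\boldsymbol\Gamma$ unknown, $u$ known, $\mathbf U$ not used); $\sqrt n\,\mathrm{vec}(\widehat{\boldsymbol\beta}-\boldsymbol\beta)$ is asymptotically normal with mean 0 and the displayed covariance matrices. *)

From HB Require Import structures.
From mathcomp Require Import all_boot all_order all_algebra.
From mathcomp Require Export mxtens.
From mathcomp Require Import boolp reals.
Set Implicit Arguments. Unset Strict Implicit. Unset Printing Implicit Defensive.
Import Order.TTheory GRing.Theory Num.Theory.
Local Open Scope ring_scope.

(* Kronecker product: [A *t B] from mathcomp-real-closed's mxtens, with the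
   standard convention (A (x) B)_{(i,k),(j,l)} = A_{ij} B_{kl}, row index i*p+k. *)

Section Defs.
Variable R : realType.

Definition symmetricmx n (A : 'M[R]_n) : Prop := A^T = A.
Definition posdef n (A : 'M[R]_n) : Prop :=
  symmetricmx A /\ forall v : 'cV[R]_n, v != 0 -> 0 < (v^T *m A *m v) 0 0.
Definition psd n (A : 'M[R]_n) : Prop :=
  symmetricmx A /\ forall v : 'cV[R]_n, 0 <= (v^T *m A *m v) 0 0.

Definition loewner_le n (A B : 'M[R]_n) : Prop := psd (B - A).

Definition penrose m n (A : 'M[R]_(m, n)) (X : 'M[R]_(n, m)) : bool :=
  [&& A *m X *m A == A, X *m A *m X == X,
      (A *m X)^T == A *m X & (X *m A)^T == X *m A].

Definition mpinv m n (A : 'M[R]_(m, n)) : 'M[R]_(n, m) :=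
  match pselect (exists X, penrose A X) with
  | left ex => xchoose ex
  | right _ => 0
  end.

(* column space of [S] (r x s) as a row space: span(S) = rows of S^T.
   [reduces Sig S] : span(S) is a reducing subspace of Sig (Sig span(S) ⊆ span(S)). *)
Definition reduces r s (Sig : 'M[R]_r) (S : 'M[R]_(r, s)) : Prop :=
  ((Sig *m S)^T <= S^T)%MS.

Definition is_envelope r p u (Sig : 'M[R]_r) (B : 'M[R]_(r, p)) (G : 'M[R]_(r, u))
  : Prop :=
  [/\ reduces Sig G, (B^T <= G^T)%MS &
      forall S : 'M[R]_r, reduces Sig S -> (B^T <= S^T)%MS -> (G^T <= S^T)%MS].

Definition Mmat u q p (eta : 'M[R]_(u, p)) (Om : 'M[R]_u) (Om0 : 'M[R]_q)
  (C : 'M[R]_p) : 'M[R]_(u * q) :=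
  (eta *m C *m eta^T) *t invmx Om0 + Om *t invmx Om0 + invmx Om *t Om0
  - 2%:R%:M.

Definition avar_c p r (c : 'cV[R]_r) (A : 'M[R]_(p * r)) : 'M[R]_(p * 1) :=
  ((1%:M : 'M[R]_p) *t c^T) *m A *m ((1%:M : 'M[R]_p) *t c).

End Defs.

From Pilot Require Import Defs.
From HB Require Import structures.
From mathcomp Require Import all_boot all_order all_algebra.
From mathcomp Require Import mxtens.
From mathcomp Require Import boolp reals.
From mathcomp Require Import ring.
Set Implicit Arguments. Unset Strict Implicit. Unset Printing Implicit Defensive.
Import Order.TTheory GRing.Theory Num.Theory.
Local Open Scope ring_scope.

(* The constrained covariance U (U^T Sig^-1 U)^-1 U^T acts as Sig on every reducing
   subspace of Sig contained in span(U).  For c in span(G) this makes both asymptotic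
   variances equal to SigX^-1 (x) c^T Sig c (the M^+ term vanishes as G0^T c = 0); for c in
   span(G02) the constrained variance is 0; for c in span(G01) with Om_{0,12} = 0, span(G01)
   is itself reducing and the constrained variance is SigX^-1 (x) b^T Om0 b, b = G0^T c.
   What remains is the M^+ term.  Cholesky factors of SigX, Om and Om0 write
   M = F F^T + C C^T, with C = X - Y for Kronecker factors satisfying X Y^T = I, and
   eta (x) b = F g with g^T g = SigX^-1 (x) b^T Om0 b.  Since span(F) lies in span(M), any A
   with M A M = M gives (F g)^T A (F g) = H^T M H for some H, and completing the square
   shows 0 <= H^T M H <= g^T g. *)

Section PositiveSemidefinite.
Variable R : realType.

Lemma sqr_row_ge0 n (v : 'rV[R]_n) : 0 <= (v *m v^T) 0 0.
Proof. by rewrite mxE; apply: sumr_ge0 => i _; rewrite mxE -expr2 sqr_ge0. Qed.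

Lemma sqr_col_ge0 n (v : 'cV[R]_n) : 0 <= (v^T *m v) 0 0.
Proof. by have := sqr_row_ge0 v^T; rewrite trmxK. Qed.

Lemma sqr_row_eq0 n (v : 'rV[R]_n) : (v *m v^T) 0 0 = 0 -> v = 0.
Proof.
rewrite mxE => /eqP; rewrite psumr_eq0 => [/allP v0|i _]; last first.
  by rewrite mxE -expr2 sqr_ge0.
apply/matrixP => i j; rewrite [i]ord1 mxE.
by have := v0 j (mem_index_enum _); rewrite mxE mulf_eq0 orbb => /eqP.
Qed.

Lemma posdef_unit n (P : 'M[R]_n) : posdef P -> P \in unitmx.
Proof.
case=> _ Ppos; rewrite unitmxE unitfE; apply/negP => /det0P [v v0 vP].
have vT0 : v^T != 0 by rewrite -trmx0 (inj_eq trmx_inj).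
by have := Ppos _ vT0; rewrite trmxK vP mul0mx mxE ltxx.
Qed.

Lemma psd0 n : psd (0 : 'M[R]_n).
Proof. by split=> [|v]; rewrite ?/Defs.symmetricmx ?trmx0 // mulmx0 mul0mx mxE. Qed.

Lemma psd_gram n m (F : 'M[R]_(n, m)) : psd (F *m F^T).
Proof.
split=> [|v]; first by rewrite /Defs.symmetricmx trmx_mul trmxK.
by have := sqr_row_ge0 (v^T *m F); rewrite trmx_mul trmxK !mulmxA.
Qed.

Lemma psdD n (A B : 'M[R]_n) : psd A -> psd B -> psd (A + B).
Proof.
case=> sA A0 [sB B0]; split=> [|v]; first by rewrite /Defs.symmetricmx linearD /= sA sB.
by rewrite mulmxDr mulmxDl mxE addr_ge0.
Qed.

Lemma psd_congr n m (A : 'M[R]_n) (K : 'M[R]_(n, m)) : psd A -> psd (K^T *m A *m K).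
Proof.
case=> sA A0; split=> [|v]; first by rewrite /Defs.symmetricmx !trmx_mul trmxK sA mulmxA.
by have := A0 (K *m v); rewrite trmx_mul !mulmxA.
Qed.

Lemma posdef_congr n m (P : 'M[R]_n) (K : 'M[R]_(n, m)) :
  posdef P -> K^T *m K = 1%:M -> posdef (K^T *m P *m K).
Proof.
case=> sP Ppos KK; split=> [|v v0].
  by rewrite /Defs.symmetricmx !trmx_mul trmxK sP mulmxA.
have Kv0 : K *m v != 0.
  by apply: contra v0 => /eqP Kv; rewrite -[v]mul1mx -KK -mulmxA Kv mulmx0.
by have := Ppos _ Kv0; rewrite trmx_mul !mulmxA.
Qed.

Lemma posdef_inv n (P : 'M[R]_n) : posdef P -> posdef (invmx P).
Proof.
move=> Pdef; have uP := posdef_unit Pdef; case: Pdef => sP Ppos.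
split=> [|v v0]; first by rewrite /Defs.symmetricmx trmx_inv sP.
have Pv0 : invmx P *m v != 0.
  by apply: contra v0 => /eqP Pv; rewrite -(mulKVmx uP v) Pv mulmx0.
have := Ppos _ Pv0; rewrite trmx_mul trmx_inv sP -!mulmxA (mulmxA P) mulmxV //.
by rewrite mul1mx !mulmxA.
Qed.

End PositiveSemidefinite.

Section Cholesky.
Variable R : realType.

Lemma quad_block n (a x : 'M[R]_1) (b : 'rV[R]_n) (D : 'M[R]_n) (v : 'cV[R]_n) :
  (col_mx x v)^T *m block_mx a b b^T D *m col_mx x v =
  x^T *m a *m x + x^T *m (b *m v) + (b *m v)^T *m x + v^T *m D *m v.
Proof.
rewrite tr_col_mx mul_row_block mul_row_col !mulmxDl trmx_mul !mulmxA.
by rewrite -!addrA (addrCA (v^T *m b^T *m x)).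
Qed.

Lemma posdef_schur n (a : R) (b : 'rV[R]_n) (D : 'M[R]_n) :
  posdef (block_mx a%:M b b^T D) -> 0 < a /\ posdef (D - a^-1 *: (b^T *m b)).
Proof.
case=> sQ Qpos; have [_ _ _ sD] := eq_block_mx (etrans (esym (tr_block_mx _ _ _ _)) sQ).
have a_gt0 : 0 < a.
  have e0 : col_mx (1 : 'M[R]_1) (0 : 'cV_n) != 0.
    apply/eqP => /(congr1 usubmx); rewrite col_mxKu linear0 => /matrixP/(_ 0 0).
    by rewrite !mxE /=; apply/eqP; rewrite oner_eq0.
  have := Qpos _ e0; rewrite quad_block !mulmx0 trmx0 !mul0mx !addr0 trmx1.
  by rewrite mul1mx mulmx1 mxE eqxx mulr1n.
split=> //; split=> [|v v0].
  by rewrite /Defs.symmetricmx linearB /= sD linearZ /= trmx_mul trmxK.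
(* [x] minimises the form in the first coordinate; what is left is the Schur complement *)
pose x : 'M[R]_1 := - a^-1 *: (b *m v).
have xv0 : col_mx x v != 0.
  by apply: contra v0 => /eqP/(congr1 dsubmx); rewrite col_mxKd linear0 => ->.
have := Qpos _ xv0; rewrite quad_block.
suff -> : x^T *m a%:M *m x + x^T *m (b *m v) + (b *m v)^T *m x + v^T *m D *m v
          = v^T *m (D - a^-1 *: (b^T *m b)) *m v by [].
have bv : v^T *m (b^T *m b) *m v = (b *m v)^T *m (b *m v) by rewrite trmx_mul !mulmxA.
rewrite mulmxBr mulmxBl -(scalemxAr _ v^T) -scalemxAl bv /x.
rewrite [b *m v]mx11_scalar; set w := (b *m v) 0 0.
rewrite scale_scalar_mx !tr_scalar_mx -!scalar_mxM addrC; congr (_ + _).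
rewrite -!raddfD /= -scaleNr scale_scalar_mx; congr (_%:M).
by field; rewrite gt_eqF.
Qed.

Lemma symmetric_block1 n (Q : 'M[R]_(1 + n)) : Q^T = Q ->
  Q = block_mx (ulsubmx Q 0 0)%:M (ursubmx Q) (ursubmx Q)^T (drsubmx Q).
Proof. by move=> sQ; rewrite -mx11_scalar trmx_ursub sQ submxK. Qed.

Lemma posdef_chol n (P : 'M[R]_n) :
  posdef P -> exists2 L : 'M_n, P = L *m L^T & L \in unitmx.
Proof.
move=> Pdef; suff [L PL] : exists L : 'M_n, P = L *m L^T.
  by exists L => //; have := posdef_unit Pdef; rewrite PL unitmx_mul => /andP[].
elim: n P Pdef => [|n IH] P Pdef; first by exists 0; apply/matrixP => [[]].
pose Q : 'M[R]_(1 + n) := P.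
set a := ulsubmx Q 0 0; set b := ursubmx Q; set D := drsubmx Q.
have EQ : Q = block_mx a%:M b b^T D := symmetric_block1 Pdef.1.
have [a_gt0 /IH [L' EL']] : 0 < a /\ posdef (D - a^-1 *: (b^T *m b)).
  by apply: posdef_schur; rewrite -EQ.
set s := Num.sqrt a.
have ss : s * s = a by rewrite -expr2 sqr_sqrtr // ltW.
have s0 : s != 0 by rewrite gt_eqF // sqrtr_gt0.
exists (block_mx s%:M 0 (s^-1 *: b^T) L' : 'M_(1 + n)).
change (Q = block_mx s%:M 0 (s^-1 *: b^T) L' *m (block_mx s%:M 0 (s^-1 *: b^T) L')^T).
rewrite tr_block_mx mulmx_block EQ !trmx0 !mulmx0 !mul0mx !addr0 tr_scalar_mx -EL'.
rewrite linearZ /= trmxK; congr block_mx.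
- by rewrite -scalar_mxM ss.
- by rewrite mul_scalar_mx scalerA mulfV // scale1r.
- by rewrite mul_mx_scalar scalerA mulfV // scale1r.
- by rewrite -scalemxAl -scalemxAr scalerA -invfM ss addrC subrK.
Qed.

End Cholesky.

Section GeneralizedInverse.
Variable R : realType.

Lemma trmx11 (A : 'M[R]_1) : A^T = A.
Proof. by rewrite [A]mx11_scalar tr_scalar_mx. Qed.

Lemma mxrank_gram n m (W : 'M[R]_(n, m)) : \rank (W *m W^T) = \rank W.
Proof.
rewrite -[RHS](mxrank_mul_ker W W^T); suff /eqP -> : (W :&: kermx W^T)%MS == 0.
  by rewrite mxrank0 addn0.
apply/rowV0P => v; rewrite sub_capmx => /andP [/submxP [x ->] /sub_kermxP xWW].
by apply: sqr_row_eq0; rewrite trmx_mul mulmxA xWW mul0mx mxE.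
Qed.

Lemma gram_sum_colspace n m l (F : 'M[R]_(n, m)) (C : 'M[R]_(n, l)) :
  exists T : 'M[R]_(n, m), F = (F *m F^T + C *m C^T) *m T.
Proof.
pose W := row_mx F C.
have WW : W *m W^T = F *m F^T + C *m C^T by rewrite tr_row_mx mul_row_col.
have /andP [_ WW_W] : (W *m W^T == W^T)%MS.
  by rewrite -(mxrank_leqif_eq (submxMl _ _)).2 mxrank_gram mxrank_tr.
have /submxP [D FD] : (F^T <= W *m W^T)%MS.
  by apply: submx_trans WW_W; rewrite tr_row_mx -addsmxE addsmxSl.
by exists D^T; rewrite -WW; apply: trmx_inj; rewrite FD !trmx_mul !trmxK.
Qed.

Lemma gram_sum_quad_le n m l s (F : 'M[R]_(n, m)) (C : 'M[R]_(n, l)) (M : 'M[R]_n)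
    (H : 'M[R]_(n, s)) (g : 'M[R]_(m, s)) :
  M = F *m F^T + C *m C^T -> F *m g = M *m H ->
  loewner_le (H^T *m M *m H) (g^T *m g).
Proof.
move=> MFC FgMH; have sM : M^T = M by rewrite MFC; have [] := psdD (psd_gram F) (psd_gram C).
split=> [|v]; first by rewrite /Defs.symmetricmx linearB /= !trmx_mul !trmxK sM !mulmxA.
set y := g *m v; set t := H *m v; set h := F^T *m t; set k := C^T *m t.
set T := t^T *m M *m t.
have hy : h^T *m y = T.
  by rewrite trmx_mul trmxK -mulmxA /y (mulmxA F) FgMH /T /t !mulmxA.
have yh : y^T *m h = T by rewrite -hy -[LHS]trmx11 trmx_mul trmxK.
have hh : h^T *m h = T - k^T *m k.
  by rewrite /T MFC mulmxDr mulmxDl !trmx_mul !trmxK !mulmxA addrK.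
have -> : v^T *m (g^T *m g - H^T *m M *m H) *m v = y^T *m y - T.
  by rewrite mulmxBr mulmxBl /T /y /t !trmx_mul !mulmxA.
have -> : y^T *m y - T = (y - h)^T *m (y - h) + k^T *m k.
  rewrite [(y - h)^T]linearB /= mulmxBr !mulmxBl yh hy hh.
  have -> : T - (T - k^T *m k) = k^T *m k by rewrite opprB addrC subrK.
  by rewrite subrK.
by rewrite mxE addr_ge0 // sqr_col_ge0.
Qed.

Lemma ginv_gram_sum_bounds n m l s (F : 'M[R]_(n, m)) (C : 'M[R]_(n, l))
    (M X : 'M[R]_n) (g : 'M[R]_(m, s)) :
  M = F *m F^T + C *m C^T -> M *m X *m M = M \/ X = 0 ->
  psd ((F *m g)^T *m X *m (F *m g)) /\
  loewner_le ((F *m g)^T *m X *m (F *m g)) (g^T *m g).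
Proof.
move=> MFC [MXM | ->]; last first.
  rewrite mulmx0 mul0mx /loewner_le subr0; split; first exact: psd0.
  by have := psd_gram g^T; rewrite trmxK.
have [T FMT] := gram_sum_colspace F C; rewrite -MFC in FMT.
have Mpsd : psd M by rewrite MFC; apply: psdD; apply: psd_gram.
have FgMH : F *m g = M *m (T *m g) by rewrite mulmxA -FMT.
have -> : (F *m g)^T *m X *m (F *m g) = (T *m g)^T *m M *m (T *m g).
  by rewrite FgMH trmx_mul Mpsd.1 !mulmxA -(mulmxA _ M X) -(mulmxA _ (M *m X)) MXM.
split; [exact: psd_congr | exact: gram_sum_quad_le MFC FgMH].
Qed.

(* [mpinv A] is the junk value 0 when no Penrose solution exists; the bounds above hold for
   it as well. *)
Lemma mpinv_ginv_or0 m n (A : 'M[R]_(m, n)) :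
  A *m mpinv A *m A = A \/ mpinv A = 0.
Proof.
rewrite /mpinv; case: pselect => [ex|_]; last by right.
by left; have /and4P [/eqP -> _ _ _] := xchooseP ex.
Qed.

End GeneralizedInverse.

Section MmatGram.
Variable R : realType.

Lemma invmxM n (A B : 'M[R]_n) :
  A \in unitmx -> B \in unitmx -> invmx (A *m B) = invmx B *m invmx A.
Proof.
move=> uA uB; have uAB : A *m B \in unitmx by rewrite unitmx_mul uA.
rewrite -[RHS]mul1mx -(mulVmx uAB) -!mulmxA (mulmxA B) mulmxV //.
by rewrite mul1mx mulmxV // mulmx1.
Qed.

Lemma tensmx11 m n : (1%:M : 'M[R]_m) *t (1%:M : 'M[R]_n) = 1%:M.
Proof.
apply/matrixP => i j.
case: (mxtens_indexP i) => i1 i2; case: (mxtens_indexP j) => j1 j2.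
rewrite tensmxE !mxE -natrM -!val_eqE /= eq_addl_mul ?ltn_ord //.
by rewrite xpair_eqE mulnb.
Qed.

Lemma gram_subr n (X Y : 'M[R]_n) : X *m Y^T = 1%:M -> Y *m X^T = 1%:M ->
  (X - Y) *m (X - Y)^T = X *m X^T + Y *m Y^T - 2%:R%:M.
Proof.
move=> XY YX; rewrite linearB /= mulmxBr !mulmxBl XY YX mulr2n.
by rewrite (raddfD (@scalar_mx R n)) /= opprB addrACA opprD.
Qed.

Lemma Mmat_gram_sum u q p (eta : 'M[R]_(u, p)) (Om : 'M[R]_u) (Om0 : 'M[R]_q)
    (SigX : 'M[R]_p) :
  posdef SigX -> posdef Om -> posdef Om0 ->
  exists (F : 'M[R]_(u * q, p * q)) (C : 'M[R]_(u * q, u * q)),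
    Mmat eta Om Om0 SigX = F *m F^T + C *m C^T /\
    forall b : 'cV[R]_q, exists g : 'M[R]_(p * q, p * 1),
      F *m g = eta *t b /\ g^T *m g = invmx SigX *t (b^T *m Om0 *m b).
Proof.
move=> /posdef_chol [L -> uL] /posdef_chol [P -> uP] /posdef_chol [Q -> uQ].
have [uPt uQt] : P^T \in unitmx /\ Q^T \in unitmx by rewrite !unitmx_tr.
set K := invmx Q^T.
have KK : K *m K^T = invmx (Q *m Q^T) by rewrite trmx_inv trmxK invmxM.
pose X := P *t K; pose Y := invmx P^T *t Q.
have XY : X *m Y^T = 1%:M.
  by rewrite trmx_tens tensmx_mul trmx_inv trmxK mulmxV // mulVmx // tensmx11.
have YX : Y *m X^T = 1%:M.
  by rewrite trmx_tens tensmx_mul mulVmx // trmx_inv trmxK mulmxV // tensmx11.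
exists ((eta *m L) *t K), (X - Y); split => [|b].
  rewrite gram_subr // /Mmat !addrA !trmx_tens !tensmx_mul KK trmx_inv trmxK.
  by rewrite -invmxM // trmx_mul !mulmxA.
exists (invmx L *t (Q^T *m b)); split.
  by rewrite tensmx_mul -mulmxA mulmxV // mulmx1 /K mulmxA mulVmx // mul1mx.
by rewrite trmx_tens tensmx_mul trmx_inv -invmxM ?unitmx_tr // trmx_mul trmxK !mulmxA.
Qed.

End MmatGram.

Section SemiOrthogonal.
Variable R : realType.

Lemma trmx_submxP r s l (V : 'M[R]_(r, s)) (W : 'M[R]_(r, l)) :
  (W^T <= V^T)%MS -> exists D : 'M[R]_(s, l), W = V *m D.
Proof. by case/submxP=> D WD; exists D^T; rewrite -[W]trmxK WD trmx_mul trmxK. Qed.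

Lemma semi_orth_proj r s l (V : 'M[R]_(r, s)) (W : 'M[R]_(r, l)) :
  V^T *m V = 1%:M -> (W^T <= V^T)%MS -> V *m V^T *m W = W.
Proof. by move=> VV /trmx_submxP [D ->]; rewrite mulmxA -(mulmxA V) VV mulmx1. Qed.

Lemma orth_submx0 r s t l (V : 'M[R]_(r, s)) (W : 'M[R]_(r, t)) (Z : 'M[R]_(r, l)) :
  W^T *m V = 0 -> (Z^T <= V^T)%MS -> W^T *m Z = 0.
Proof. by move=> WV /trmx_submxP [D ->]; rewrite mulmxA WV mul0mx. Qed.

Lemma row_mx_semi_orth r s t (A : 'M[R]_(r, s)) (B : 'M[R]_(r, t)) :
  A^T *m A = 1%:M -> B^T *m B = 1%:M -> A^T *m B = 0 ->
  (row_mx A B)^T *m row_mx A B = 1%:M.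
Proof.
move=> AA BB AB; have BA : B^T *m A = 0 by rewrite -[A]trmxK -trmx_mul AB trmx0.
by rewrite tr_row_mx mul_col_row AA AB BA BB -scalar_mx_block.
Qed.

Lemma quad_semi_orth r s (V : 'M[R]_(r, s)) (S : 'M[R]_r) (c : 'cV[R]_r) :
  V *m V^T *m c = c -> c^T *m (V *m (V^T *m S *m V) *m V^T) *m c = c^T *m S *m c.
Proof.
move=> VVc; have cVV : c^T *m V *m V^T = c^T.
  by rewrite -[RHS](congr1 trmx VVc) !trmx_mul trmxK mulmxA.
by rewrite !mulmxA cVV -!mulmxA (mulmxA V) VVc.
Qed.

Lemma quad_outer0 r s (V : 'M[R]_(r, s)) (A : 'M[R]_s) (c : 'cV[R]_r) :
  V^T *m c = 0 -> c^T *m (V *m A *m V^T) *m c = 0.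
Proof. by move=> Vc; rewrite -!mulmxA Vc !mulmx0. Qed.

End SemiOrthogonal.

Section ReducingSubspaces.
Variable R : realType.

Lemma reducesP r s (Sig : 'M[R]_r) (V : 'M[R]_(r, s)) :
  reduces Sig V <-> exists D : 'M[R]_s, Sig *m V = V *m D.
Proof.
split=> [/trmx_submxP [D SVD] | [D SVD]]; first by exists D.
by rewrite /reduces SVD trmx_mul submxMl.
Qed.

Lemma reduces_orth_block r u k1 k2 (Sig : 'M[R]_r) (G : 'M[R]_(r, u))
    (G1 : 'M[R]_(r, k1)) (G2 : 'M[R]_(r, k2)) :
  Sig^T = Sig -> G *m G^T + G1 *m G1^T + G2 *m G2^T = 1%:M -> G^T *m G1 = 0 ->
  reduces Sig G -> G1^T *m Sig *m G2 = 0 -> reduces Sig G1.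
Proof.
move=> sS Id GG1 /reducesP [D SGD] S12; apply/reducesP; exists (G1^T *m Sig *m G1).
have S01 : G^T *m Sig *m G1 = 0.
  by rewrite -sS -trmx_mul SGD trmx_mul -mulmxA GG1 mulmx0.
have S21 : G2^T *m Sig *m G1 = 0.
  by apply: trmx_inj; rewrite trmx0 !trmx_mul trmxK sS mulmxA S12.
rewrite -[Sig *m G1]mul1mx -Id !mulmxDl -!mulmxA !(mulmxA G^T) !(mulmxA G2^T) S01 S21.
by rewrite !mulmx0 add0r addr0 (mulmxA G1^T).
Qed.

Lemma constrained_quad_reducing r k s (Sig : 'M[R]_r) (U : 'M[R]_(r, k))
    (V : 'M[R]_(r, s)) (c : 'cV[R]_r) :
  posdef Sig -> U^T *m U = 1%:M -> reduces Sig V -> (V^T <= U^T)%MS ->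
  (c^T <= V^T)%MS ->
  c^T *m (U *m invmx (U^T *m invmx Sig *m U) *m U^T) *m c = c^T *m Sig *m c.
Proof.
move=> Sdef UU /reducesP [D SVD] VU /trmx_submxP [w ->].
set N := U^T *m invmx Sig *m U.
have uN : N \in unitmx := posdef_unit (posdef_congr (posdef_inv Sdef) UU).
have USV : U *m U^T *m (Sig *m V) = Sig *m V.
  by rewrite SVD mulmxA semi_orth_proj.
have NUSV : N *m (U^T *m (Sig *m V)) = U^T *m V.
  have -> : N *m (U^T *m (Sig *m V)) = U^T *m invmx Sig *m (U *m U^T *m (Sig *m V)).
    by rewrite !mulmxA.
  by rewrite USV -mulmxA mulKmx // posdef_unit.
have UNUV : U *m invmx N *m U^T *m V = Sig *m V.
  by rewrite -mulmxA -(mulmxA U) -NUSV mulKmx // mulmxA USV.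
by rewrite -!mulmxA; congr (_ *m _); rewrite !mulmxA UNUV.
Qed.

End ReducingSubspaces.

Section AsymptoticCovariances.
Variable R : realType.

Lemma avar_cD p r (c : 'cV[R]_r) (A B : 'M[R]_(p * r)) :
  avar_c c (A + B) = avar_c c A + avar_c c B.
Proof. by rewrite /avar_c mulmxDr mulmxDl. Qed.

Lemma avar_c_tens p r (c : 'cV[R]_r) (P : 'M[R]_p) (S : 'M[R]_r) :
  avar_c c (P *t S) = P *t (c^T *m S *m c).
Proof. by rewrite /avar_c !tensmx_mul mul1mx mulmx1. Qed.

Lemma avar_c_sandwich p r u q (c : 'cV[R]_r) (A : 'M[R]_(u, p)) (V : 'M[R]_(r, q))
    (X : 'M[R]_(u * q)) :
  avar_c c ((A^T *t V) *m X *m (A *t V^T)) =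
  (A *t (V^T *m c))^T *m X *m (A *t (V^T *m c)).
Proof.
rewrite /avar_c !mulmxA tensmx_mul mul1mx -!mulmxA tensmx_mul mulmx1.
by rewrite trmx_tens trmx_mul trmxK.
Qed.

Lemma Mmat_mpinv_bounds u q p (eta : 'M[R]_(u, p)) (Om : 'M[R]_u) (Om0 : 'M[R]_q)
    (SigX : 'M[R]_p) (b : 'cV[R]_q) :
  posdef SigX -> posdef Om -> posdef Om0 ->
  psd ((eta *t b)^T *m mpinv (Mmat eta Om Om0 SigX) *m (eta *t b)) /\
  loewner_le ((eta *t b)^T *m mpinv (Mmat eta Om Om0 SigX) *m (eta *t b))
             (invmx SigX *t (b^T *m Om0 *m b)).
Proof.
move=> SXdef Omdef Om0def.
have [F [C [MFC /(_ b) [g [<- <-]]]]] := Mmat_gram_sum eta SXdef Omdef Om0def.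
exact: ginv_gram_sum_bounds MFC (mpinv_ginv_or0 _).
Qed.

End AsymptoticCovariances.

Theorem proposition3 (R : realType) (r p u k1 k2 : nat)
  (Sig : 'M[R]_r) (SigX : 'M[R]_p) (beta : 'M[R]_(r, p))
  (G : 'M[R]_(r, u)) (G01 : 'M[R]_(r, k1)) (G02 : 'M[R]_(r, k2))
  (c : 'cV[R]_r) :
  posdef Sig -> posdef SigX ->
  (* (G, G01, G02) is an orthogonal matrix *)
  G^T *m G = 1%:M -> G01^T *m G01 = 1%:M -> G02^T *m G02 = 1%:M ->
  G^T *m G01 = 0 -> G^T *m G02 = 0 -> G01^T *m G02 = 0 ->
  G *m G^T + G01 *m G01^T + G02 *m G02^T = 1%:M ->
  (* span(G) is the Sigma-envelope of span(beta) *)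
  is_envelope Sig beta G ->
  let U := row_mx G G01 in
  let G0 := row_mx G01 G02 in
  let eta := G^T *m beta in
  let Om := G^T *m Sig *m G in
  let Om0 := G0^T *m Sig *m G0 in
  let Om012 := G01^T *m Sig *m G02 in
  let M := Mmat eta Om Om0 SigX in
  let avar_cm := invmx SigX *t (U *m invmx (U^T *m invmx Sig *m U) *m U^T) in
  let avar_em := invmx SigX *t (G *m Om *m G^T)
                 + (eta^T *t G0) *m mpinv M *m (eta *t G0^T) in
  [/\ (c^T <= G^T)%MS -> avar_c c avar_cm = avar_c c avar_em,
      (c^T <= G02^T)%MS -> loewner_le (avar_c c avar_cm) (avar_c c avar_em) &
      (c^T <= G01^T)%MS ->
        \rank M = \rank ((eta *m SigX *m eta^T) *t invmx Om0) ->
        Om012 = 0 ->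
        loewner_le (avar_c c avar_em) (avar_c c avar_cm)].
Proof.
move=> Sdef SXdef GG G1G1 G2G2 GG1 GG2 G1G2 Id [redG _ _] U G0 eta Om Om0 Om012 M acm aem.
have UU : U^T *m U = 1%:M := row_mx_semi_orth GG G1G1 GG1.
have G0G0 : G0^T *m G0 = 1%:M := row_mx_semi_orth G1G1 G2G2 G1G2.
have [q_ge0 q_le] := Mmat_mpinv_bounds eta (G0^T *m c) SXdef (posdef_congr Sdef GG)
  (posdef_congr Sdef G0G0).
rewrite /acm /aem avar_cD !avar_c_tens avar_c_sandwich -/M.
have [GU G1U] : (G^T <= U^T)%MS /\ (G01^T <= U^T)%MS.
  by split; rewrite /U tr_row_mx -addsmxE; [exact: addsmxSl | exact: addsmxSr].
split=> [cG | cG2 | cG1 _ S12].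
- have G0c : G0^T *m c = 0.
    apply: orth_submx0 cG; rewrite tr_row_mx mul_col_mx -[G]trmxK -!trmx_mul.
    by rewrite GG1 GG2 !trmx0 col_mx0.
  rewrite G0c tensmx0 mulmx0 addr0 (quad_semi_orth _ (semi_orth_proj GG cG)).
  by rewrite (constrained_quad_reducing Sdef UU redG).
- have Gc : G^T *m c = 0 := orth_submx0 GG2 cG2.
  have Uc : U^T *m c = 0.
    by apply: orth_submx0 cG2; rewrite tr_row_mx mul_col_mx GG2 G1G2 col_mx0.
  by rewrite !quad_outer0 // !tensmx0 add0r /loewner_le subr0.
-
  have redG1 := reduces_orth_block Sdef.1 Id GG1 redG S12.
  have G0Pc : G0 *m G0^T *m c = c.
    apply: semi_orth_proj => //; apply: submx_trans cG1 _.
    by rewrite tr_row_mx -addsmxE addsmxSl.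
  rewrite (quad_outer0 _ (orth_submx0 GG1 cG1)) tensmx0 add0r.
  rewrite (constrained_quad_reducing Sdef UU redG1) // -(quad_semi_orth Sig G0Pc).
  by move: q_le; rewrite trmx_mul trmxK !mulmxA.
Qed.
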